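(* Let $d\in\mathbb{N}$. Then there exists a $\left(d+1,\frac{1}{2d}\right)$-secluded unit hypercube partition $\mathcal{P}$ of $\mathbb{R}^{d}$. That is, for every point $\vec{p}\in\mathbb{R}^{d}$, \[\left|\mathcal{N}_{\frac{1}{2d}}(\vec{p})\right|\leq d+1.\]
   Context: $\mathbb{N}$ denotes the positive integers. On $\mathbb{R}^d$ use the metric $d_{max}(\vec{x},\vec{y})=\max_{i\in[d]}|x_i-y_i|$ (the $\ell^\infty$ metric); $\overline{B}_{\epsilon}(\vec{p})=\{\vec{x}\in\mathbb{R}^d: d_{max}(\vec{x},\vec{p})\le\epsilon\}$ is the closed ball. For a partition $\mathcal{P}$ of $\mathbb{R}^d$, $\vec{p}\in\mathbb{R}^d$ and $\epsilon>0$, $\mathcal{N}_{\epsilon}(\vec{p})=\{X\in\mathcal{P}: X\cap\overline{B}_{\epsilon}(\vec{p})\neq\emptyset\}$. A partition $\mathcal{P}$ of $\mathbb{R}^d$ is $(k,\epsilon)$-secluded if $|\mathcal{N}_\epsilon(\vec{p})|\le k$ for every $\vec{p}\in\mathbb{R}^d$. A unit hypercube is a set of the form $\vec{a}+[0,1)^d$ with $\vec{a}\in\mathbb{R}^d$; a unit hypercube partition is a partition of $\mathbb{R}^d$ all of whose members are unit hypercubes. *)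

From Stdlib Require Import Reals Lra List.
Open Scope R_scope.

Definition pt (d : nat) := {i : nat | (i < d)%nat} -> R.

Definition pset (d : nat) := pt d -> Prop.

Definition closed_ball {d : nat} (eps : R) (p : pt d) : pset d :=
  fun x => forall i, Rabs (x i - p i) <= eps.

Definition is_partition {d : nat} (P : pset d -> Prop) : Prop :=
  (forall X, P X -> exists x, X x) /\
  (forall X Y, P X -> P Y -> X <> Y -> forall x, X x -> Y x -> False) /\
  (forall x, exists X, P X /\ X x).

Definition unit_hypercube {d : nat} (a : pt d) : pset d :=
  fun x => forall i, a i <= x i < a i + 1.

Definition is_unit_hypercube {d : nat} (X : pset d) : Prop :=
  exists a : pt d, X = unit_hypercube a.

Definition unit_hypercube_partition {d : nat} (P : pset d -> Prop) : Prop :=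
  is_partition P /\ forall X, P X -> is_unit_hypercube X.

Definition nbhd_members {d : nat} (P : pset d -> Prop) (eps : R) (p : pt d)
  : pset d -> Prop :=
  fun X => P X /\ exists x, X x /\ closed_ball eps p x.

Definition card_le {d : nat} (S : pset d -> Prop) (k : nat) : Prop :=
  exists L : list (pset d), (length L <= k)%nat /\ forall X, S X -> In X L.

Definition secluded {d : nat} (P : pset d -> Prop) (k : nat) (eps : R) : Prop :=
  forall p : pt d, card_le (nbhd_members P eps p) k.

From Stdlib Require Import Reals.
From Stdlib Require Import Lra Lia List ZArith Wf_nat.
From Stdlib Require Import Classical FunctionalExtensionality PropExtensionality.
Open Scope R_scope.

(* Label the cubes by integer vectors n and put the cube of n at the corner
   n_i + T_i / d, where T_i = sum_{j<i} (j+1) n_j: along each axis the unit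
   cubes are stacked as usual, but each column is shifted by a multiple of 1/d
   determined by the earlier coordinates.  If two cubes meet the same ball of
   radius 1/(2d), their corners differ by less than 1 + 1/d in every coordinate,
   so d times that difference is an integer in [-d, d].  Scanning the
   coordinates in order, the difference of the partial shifts T_k then stays in
   [-k, k] and vanishes only if the labels agree so far.  Hence the cubes
   meeting the ball are determined by the total shift T_d, whose values lie in
   a window of width d: there are at most d + 1 of them. *)

Section Counting.

Context {d : nat} {I : Type} (M : I -> Prop) (g : I -> Z).

Lemma Z_window_of_bounded_spread (k : nat) :
  (forall i j, M i -> M j -> (Z.abs (g i - g j) <= Z.of_nat k)%Z) ->
  exists a, forall i, M i -> (a <= g i <= a + Z.of_nat k)%Z.
Proof.
  intros spread.
  destruct (classic (exists i, M i)) as [[i0 Mi0] | none].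
  2:{ exists 0%Z. intros i Mi. exfalso. eauto. }
  set (base := (g i0 - Z.of_nat k)%Z).
  pose (P m := exists i, M i /\ g i = (base + Z.of_nat m)%Z).
  destruct (dec_inh_nat_subset_has_unique_least_element P)
    as [m0 [[[i1 [Mi1 Ei1]] least] _]].
  - intros m. apply classic.
  - exists k, i0. split; [exact Mi0 | unfold base; lia].
  - exists (base + Z.of_nat m0)%Z. intros i Mi.
    assert (above_base : (base <= g i)%Z).
    { specialize (spread i i0 Mi Mi0). unfold base. lia. }
    assert (m0 <= Z.to_nat (g i - base))%nat.
    { apply least. exists i. split; [exact Mi | lia]. }
    specialize (spread i i1 Mi Mi1). lia.
Qed.

Lemma card_le_of_bounded_spread (A : pset d -> Prop) (F : I -> pset d) (k : nat) :
  (forall X, A X -> exists i, M i /\ X = F i) ->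
  (forall i j, M i -> M j -> g i = g j -> F i = F j) ->
  (forall i j, M i -> M j -> (Z.abs (g i - g j) <= Z.of_nat k)%Z) ->
  card_le A (S k).
Proof.
  intros hA hinj spread.
  destruct (Z_window_of_bounded_spread k spread) as [a window].
  (* The union of the F i with g i = t, which is the unique such F i if any. *)
  pose (fiber t := fun x : pt d => exists i, M i /\ g i = t /\ F i x).
  exists (map (fun j => fiber (a + Z.of_nat j)%Z) (seq 0 (S k))).
  split; [rewrite length_map, length_seq; lia |].
  intros X AX. destruct (hA X AX) as [i [Mi ->]].
  specialize (window i Mi).
  apply in_map_iff. exists (Z.to_nat (g i - a)).
  split; [| apply in_seq; lia].
  replace (a + Z.of_nat (Z.to_nat (g i - a)))%Z with (g i) by lia.
  apply functional_extensionality. intros x.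
  apply propositional_extensionality. split.
  - intros [j [Mj [Eg Fx]]]. rewrite <- (hinj j i Mj Mi Eg). exact Fx.
  - intros Fx. exists i. auto.
Qed.

End Counting.

Fixpoint stair_shift (n : nat -> Z) (k : nat) : Z :=
  match k with
  | O => 0
  | S k' => stair_shift n k' + Z.of_nat k * n k'
  end.

Definition stair_corner (d : nat) (n : nat -> Z) : pt d :=
  fun i => IZR (n (proj1_sig i)) + IZR (stair_shift n (proj1_sig i)) / INR d.

Definition staircase (d : nat) : pset d -> Prop :=
  fun X => exists n, X = unit_hypercube (stair_corner d n).

Lemma stair_shift_ext (n n' : nat -> Z) (k : nat) :
  (forall j, (j < k)%nat -> n j = n' j) -> stair_shift n k = stair_shift n' k.
Proof.
  induction k as [|k IH]; intros same; simpl; [reflexivity|].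
  rewrite IH by (intros j hj; apply same; lia).
  rewrite same by lia. reflexivity.
Qed.

Lemma stair_corner_ext (d : nat) (n n' : nat -> Z) :
  (forall j, (j < d)%nat -> n j = n' j) -> stair_corner d n = stair_corner d n'.
Proof.
  intros same. apply functional_extensionality. intros [i hi].
  unfold stair_corner; simpl.
  rewrite same by exact hi.
  rewrite (stair_shift_ext n n' i) by (intros j hj; apply same; lia).
  reflexivity.
Qed.

Lemma Z_eq_of_shifted_unit_intervals (a b : Z) (r x : R) :
  IZR a + r <= x < IZR a + r + 1 -> IZR b + r <= x < IZR b + r + 1 -> a = b.
Proof.
  intros ha hb.
  assert (a_lt : IZR a < IZR (b + 1)) by (rewrite plus_IZR; lra).
  assert (b_lt : IZR b < IZR (a + 1)) by (rewrite plus_IZR; lra).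
  apply lt_IZR in a_lt, b_lt. lia.
Qed.

Lemma staircase_labels_eq_of_meet (d : nat) (n n' : nat -> Z) (x : pt d) :
  unit_hypercube (stair_corner d n) x -> unit_hypercube (stair_corner d n') x ->
  forall j, (j < d)%nat -> n j = n' j.
Proof.
  intros hx hx'.
  enough (below : forall k, (k <= d)%nat -> forall j, (j < k)%nat -> n j = n' j)
    by (intros j hj; apply (below d); lia).
  induction k as [|k IH]; intros hk j hj; [lia|].
  destruct (Nat.eq_dec j k) as [->|]; [| apply IH; lia].
  specialize (hx (exist _ k hk)). specialize (hx' (exist _ k hk)).
  unfold stair_corner in hx, hx'; simpl in hx, hx'.
  rewrite (stair_shift_ext n n' k) in hx by (apply IH; lia).
  exact (Z_eq_of_shifted_unit_intervals _ _ _ _ hx hx').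
Qed.

(* Coordinates of x indexed by nat; the value 0 beyond d is never used. *)
Definition coord_ext {d : nat} (x : pt d) (k : nat) : R :=
  match lt_dec k d with
  | left h => x (exist _ k h)
  | right _ => 0
  end.

Fixpoint greedy_shift {d : nat} (x : pt d) (k : nat) : Z :=
  match k with
  | O => 0
  | S k' =>
      greedy_shift x k'
      + Z.of_nat k * Int_part (coord_ext x k' - IZR (greedy_shift x k') / INR d)
  end.

Definition greedy_label {d : nat} (x : pt d) (k : nat) : Z :=
  Int_part (coord_ext x k - IZR (greedy_shift x k) / INR d).

Lemma stair_shift_greedy_label {d : nat} (x : pt d) (k : nat) :
  stair_shift (greedy_label x) k = greedy_shift x k.
Proof. induction k as [|k IH]; simpl; [| rewrite IH]; reflexivity. Qed.

Lemma greedy_cube_mem {d : nat} (x : pt d) :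
  unit_hypercube (stair_corner d (greedy_label x)) x.
Proof.
  intros [k hk]. unfold stair_corner; simpl.
  rewrite stair_shift_greedy_label.
  assert (coord : coord_ext x k = x (exist _ k hk)).
  { unfold coord_ext. destruct (lt_dec k d) as [h|]; [| lia].
    f_equal. f_equal. apply proof_irrelevance. }
  unfold greedy_label. rewrite coord.
  destruct (base_Int_part (x (exist _ k hk) - IZR (greedy_shift x k) / INR d)).
  lra.
Qed.

Lemma staircase_unit_hypercube_partition (d : nat) :
  unit_hypercube_partition (staircase d).
Proof.
  split; [split; [| split] |].
  - intros X [n ->]. exists (stair_corner d n). intros i. lra.
  - intros X Y [n ->] [n' ->] hne x hx hx'.
    apply hne, f_equal, stair_corner_ext.
    exact (staircase_labels_eq_of_meet d n n' x hx hx').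
  - intros x. exists (unit_hypercube (stair_corner d (greedy_label x))).
    split; [eexists; reflexivity | apply greedy_cube_mem].
  - intros X [n ->]. eexists. reflexivity.
Qed.

Definition cube_meets_ball {d : nat} (eps : R) (p : pt d) (a : pt d) : Prop :=
  exists x, unit_hypercube a x /\ closed_ball eps p x.

Lemma corner_gap_lt (c c' x x' p e : R) :
  c <= x < c + 1 -> c' <= x' < c' + 1 ->
  Rabs (x - p) <= e -> Rabs (x' - p) <= e -> Rabs (c' - c) < 1 + 2 * e.
Proof.
  intros hx hx' hp hp'.
  unfold Rabs in *. repeat destruct Rcase_abs; lra.
Qed.

Lemma stair_gap_bound (d : nat) (p : pt d) (n n' : nat -> Z) :
  (1 <= d)%nat ->
  cube_meets_ball (1 / (2 * INR d)) p (stair_corner d n) ->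
  cube_meets_ball (1 / (2 * INR d)) p (stair_corner d n') ->
  forall k, (k < d)%nat ->
    (Z.abs (Z.of_nat d * (n' k - n k) + (stair_shift n' k - stair_shift n k))
       <= Z.of_nat d)%Z.
Proof.
  intros hd [x [hx bx]] [x' [hx' bx']] k hk.
  assert (d_pos : 0 < INR d) by (apply lt_0_INR; lia).
  set (i := exist (fun i => (i < d)%nat) k hk).
  pose proof (corner_gap_lt _ _ _ _ _ _ (hx i) (hx' i) (bx i) (bx' i)) as gap.
  unfold stair_corner in gap; simpl in gap.
  set (z := (Z.of_nat d * (n' k - n k) + (stair_shift n' k - stair_shift n k))%Z).
  assert (z_eq : IZR z = INR d * (IZR (n' k) + IZR (stair_shift n' k) / INR d
                                  - (IZR (n k) + IZR (stair_shift n k) / INR d))).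
  { unfold z. rewrite plus_IZR, mult_IZR, !minus_IZR, <- INR_IZR_INZ. field. lra. }
  assert (z_lt : IZR (Z.abs z) < IZR (Z.of_nat d + 1)).
  { rewrite abs_IZR, z_eq, Rabs_mult, Rabs_pos_eq, plus_IZR, <- INR_IZR_INZ by lra.
    replace (INR d + 1) with (INR d * (1 + 2 * (1 / (2 * INR d)))) by (field; lra).
    apply Rmult_lt_compat_l; assumption. }
  apply lt_IZR in z_lt. lia.
Qed.

Lemma stair_shift_step (d k : nat) (D m : Z) :
  (k < d)%nat -> (Z.abs D <= Z.of_nat k)%Z ->
  (Z.abs (Z.of_nat d * m + D) <= Z.of_nat d)%Z ->
  (Z.abs (D + Z.of_nat (S k) * m) <= Z.of_nat (S k))%Z /\
  (D + Z.of_nat (S k) * m = 0 -> m = 0 /\ D = 0)%Z.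
Proof.
  intros hk hD hgap.
  assert (m_small : (m = -1 \/ m = 0 \/ m = 1)%Z) by nia.
  destruct m_small as [-> | [-> | ->]]; lia.
Qed.

Lemma stair_shift_diff_bound (d : nat) (n n' : nat -> Z) :
  (forall k, (k < d)%nat ->
     (Z.abs (Z.of_nat d * (n' k - n k) + (stair_shift n' k - stair_shift n k))
        <= Z.of_nat d)%Z) ->
  forall k, (k <= d)%nat ->
    (Z.abs (stair_shift n' k - stair_shift n k) <= Z.of_nat k)%Z /\
    (stair_shift n' k = stair_shift n k -> forall j, (j < k)%nat -> n' j = n j).
Proof.
  intros gap. induction k as [|k IH]; intros hk.
  - split; [simpl; lia | intros _ j hj; lia].
  - destruct IH as [IH_bound IH_eq]; [lia |].
    destruct (stair_shift_step d k (stair_shift n' k - stair_shift n k) (n' k - n k))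
      as [step_bound step_eq]; [lia | exact IH_bound | exact (gap k hk) |].
    assert (shift_succ : (stair_shift n' (S k) - stair_shift n (S k)
       = stair_shift n' k - stair_shift n k + Z.of_nat (S k) * (n' k - n k))%Z)
      by (cbn [stair_shift]; ring).
    rewrite shift_succ. split; [exact step_bound |].
    intros same j hj.
    destruct (step_eq ltac:(lia)) as [m0 D0].
    destruct (Nat.eq_dec j k) as [-> | ]; [lia |].
    apply IH_eq; lia.
Qed.

Lemma staircase_secluded (d : nat) :
  (1 <= d)%nat -> secluded (staircase d) (S d) (1 / (2 * INR d)).
Proof.
  intros hd p.
  pose (M n := cube_meets_ball (1 / (2 * INR d)) p (stair_corner d n)).
  assert (shift_diff : forall n n', M n -> M n' ->
    (Z.abs (stair_shift n' d - stair_shift n d) <= Z.of_nat d)%Z /\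
    (stair_shift n' d = stair_shift n d -> forall j, (j < d)%nat -> n' j = n j)).
  { intros n n' Mn Mn'.
    exact (stair_shift_diff_bound d n n' (stair_gap_bound d p n n' hd Mn Mn') d (le_n d)). }
  apply (card_le_of_bounded_spread M (fun n => stair_shift n d) _
           (fun n => unit_hypercube (stair_corner d n))).
  - intros X [[n ->] meets]. exists n. split; [exact meets | reflexivity].
  - intros n n' Mn Mn' same. f_equal. apply stair_corner_ext.
    intros j hj. symmetry. exact (proj2 (shift_diff n n' Mn Mn') (eq_sym same) j hj).
  - intros n n' Mn Mn'. exact (proj1 (shift_diff n' n Mn' Mn)).
Qed.

Theorem mainTheorem1 (d : nat) (hd : (1 <= d)%nat) :
  exists P : pset d -> Prop,
    unit_hypercube_partition P /\
    secluded P (S d) (1 / (2 * INR d)).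
Proof.
  exists (staircase d). split.
  - apply staircase_unit_hypercube_partition.
  - apply staircase_secluded, hd.
Qed.
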